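(* Let $X$ be the Cartwright–Steger surface. Suppose $D$ is a divisor on $X$, not necessarily effective, with $K_X\cdot D=2$ and $D^2=0$. Then $D$ is numerically equivalent to one of the two $\mathbb{Q}$-divisors $$D_I=\tfrac19(E_1-E_3+2C_1)\ \ (\text{numerically } \tfrac19(2E_3+C_1-C_2)),\qquad D_{II}=\tfrac19(-E_1+5E_3-2C_1)\ \ (\text{numerically }\tfrac19(2E_3-C_1+C_2)).$$ Equivalently, $(D\cdot E_1,D\cdot E_3,D\cdot C_1)\in\{(2,2,0),(2,2,4)\}$.
   Context: The Cartwright–Steger surface $X$ is the compact arithmetic complex ball quotient of Cartwright–Steger: minimal of general type, $p_g=q=1$, $K_X^2=9$, $H^2(X,\mathbb{Z})\cong\mathbb{Z}^5$ torsion free, and $\mathrm{NS}(X)$ free of rank 3. $X$ contains irreducible totally geodesic curves $E_1,E_2,E_3$ (geometric genus 4), $C_1,C_2$ (geometric genus 4), $C_3,C_4$ (geometric genus 10) (the preimages of the two branch curves of the Deligne–Mostow quotient $\mathbb{P}(1,2,3)$), with intersection numbers (rows/columns in the order $E_1,E_2,E_3,C_1,C_2,C_3,C_4$): $$\begin{pmatrix}5&13&9&11&11&25&25\\13&5&9&7&7&29&29\\9&9&9&9&9&27&27\\11&7&9&-1&17&37&19\\11&7&9&17&-1&19&37\\25&29&27&37&19&71&89\\25&29&27&19&37&89&71\end{pmatrix}.$$ $K_X$ is numerically equivalent to $E_3$, and $3E_3$ is numerically equivalent to $E_1+C_1+C_2$. The classes of $E_1,E_3,C_1$ form a $\mathbb{Q}$-basis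 of $\mathrm{NS}(X)\otimes\mathbb{Q}$. *)

From HB Require Import structures.
From mathcomp Require Import all_boot all_order all_algebra.
Set Implicit Arguments. Unset Strict Implicit. Unset Printing Implicit Defensive.
Import Order.TTheory GRing.Theory Num.Theory.
Local Open Scope ring_scope.

(* Intersection matrix of the curves E1,E2,E3,C1,C2,C3,C4 (in this order). *)
Definition CS_matrix : seq (seq int) :=
  [:: [:: 5; 13; 9; 11; 11; 25; 25];
      [:: 13; 5; 9; 7; 7; 29; 29];
      [:: 9; 9; 9; 9; 9; 27; 27];
      [:: 11; 7; 9; -1; 17; 37; 19];
      [:: 11; 7; 9; 17; -1; 19; 37];
      [:: 25; 29; 27; 37; 19; 71; 89];
      [:: 25; 29; 27; 19; 37; 89; 71]].

Definition CS_int (i j : 'I_7) : int := nth 0 (nth [::] CS_matrix i) j.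

Record CS_surface := {
  Div : zmodType;
  dot : Div -> Div -> int;
  dotC : forall x y, dot x y = dot y x;
  dotDl : forall x y z, dot (x + y) z = dot x z + dot y z;
  KX : Div;
  crv : 'I_7 -> Div;
  crv_dot : forall i j, dot (crv i) (crv j) = CS_int i j
}.

Section Names.
Variable X : CS_surface.
Definition E1 := crv X (@Ordinal 7 0 isT).
Definition E2 := crv X (@Ordinal 7 1 isT).
Definition E3 := crv X (@Ordinal 7 2 isT).
Definition C1 := crv X (@Ordinal 7 3 isT).
Definition C2 := crv X (@Ordinal 7 4 isT).
Definition C3 := crv X (@Ordinal 7 5 isT).
Definition C4 := crv X (@Ordinal 7 6 isT).
End Names.

Definition num_equiv (X : CS_surface) (D D' : Div X) : Prop :=
  forall F : Div X, dot D F = dot D' F.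

(* The standing facts about X: K_X == E3 and 3E3 == E1 + C1 + C2 numerically,
   and NS(X) (x) Q has Q-basis the classes of E1, E3, C1: every divisor has a
   nonzero integer multiple numerically equivalent to an integer combination
   of E1, E3, C1.  (Linear independence follows from the intersection matrix.) *)
Definition is_Cartwright_Steger (X : CS_surface) : Prop :=
  [/\ num_equiv (KX X) (E3 X),
      num_equiv (E3 X *+ 3) (E1 X + C1 X + C2 X) &
      forall D : Div X, exists n : int, n != 0 /\
        exists a b c : int, forall F : Div X,
          n * dot D F = a * dot (E1 X) F + b * dot (E3 X) F + c * dot (C1 X) F].

Definition num_equiv_Q9 (X : CS_surface) (D : Div X) (a b c : int) : Prop :=
  forall F : Div X, (dot D F)%:~R =
    (1 / 9 : rat) * (a * dot (E1 X) F + b * dot (E3 X) F + c * dot (C1 X) F)%:~R.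

(** Writing [D] numerically as [(a E1 + b E3 + c C1)/n], the degrees
    [x = D.E1], [y = D.E3], [z = D.C1] determine [D] through the inverse of the
    Gram matrix of [E1, E3, C1], whose determinant is [18^2]; in particular
    [18 D^2] is an integral quadratic form in [x, y, z].  Since [K_X == E3],
    [y = 2], and [D^2 = 0] becomes a definite conic in [x, z] whose only
    integer points are [(2, 0)] and [(2, 4)]. *)

From HB Require Import structures.
From mathcomp Require Import all_boot all_order all_algebra.
From mathcomp Require Import zify ring.
Import GRing.Theory Num.Theory.
Local Open Scope ring_scope.

Section DegreesDetermineDivisor.

Context {X : CS_surface} {D : Div X} {n a b c : int}.
Hypothesis n_neq0 : n != 0.
Hypothesis D_coord : forall F : Div X,
  n * dot D F = a * dot (E1 X) F + b * dot (E3 X) F + c * dot (C1 X) F.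

Let x := dot D (E1 X).
Let y := dot D (E3 X).
Let z := dot D (C1 X).

Lemma coord_from_degrees :
  [/\ 18 * a = n * (-5 * x + 6 * y - z),
      18 * b = n * (6 * x - 7 * y + 3 * z) &
      18 * c = n * (- x + 3 * y - 2 * z)].
Proof.
have := D_coord (E1 X); have := D_coord (E3 X); have := D_coord (C1 X).
rewrite /x /y /z /E1 /E3 /C1 !crv_dot /CS_int /=.
by split; lia.
Qed.

Lemma degrees_determine_dot (F : Div X) :
  18 * dot D F = (-5 * x + 6 * y - z) * dot (E1 X) F
    + (6 * x - 7 * y + 3 * z) * dot (E3 X) F + (- x + 3 * y - 2 * z) * dot (C1 X) F.
Proof.
have [ha hb hc] := coord_from_degrees.
apply: (mulfI n_neq0).
transitivity (18 * (n * dot D F)); first by ring.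
rewrite D_coord; transitivity
  ((18 * a) * dot (E1 X) F + (18 * b) * dot (E3 X) F + (18 * c) * dot (C1 X) F).
  by ring.
by rewrite ha hb hc; ring.
Qed.

Lemma self_intersection_degrees :
  18 * dot D D = -5 * x ^+ 2 + 12 * x * y - 2 * x * z - 7 * y ^+ 2 + 6 * y * z - 2 * z ^+ 2.
Proof.
rewrite degrees_determine_dot ![dot _ D]dotC -/x -/y -/z; ring.
Qed.

End DegreesDetermineDivisor.

(* [2 (5x^2 + 2xz + 2z^2 - 24x - 12z + 28) = (2z + x - 6)^2 + 9(x - 2)^2 - 16]. *)
Lemma conic_int_solutions (x z : int) :
  5 * x ^+ 2 + 2 * x * z + 2 * z ^+ 2 - 24 * x - 12 * z + 28 = 0 ->
  x = 2 /\ (z = 0 \/ z = 4).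
Proof.
move=> conic.
have square_sum : (2 * z + x - 6) ^+ 2 + 9 * (x - 2) ^+ 2 = 16.
  by rewrite -[16]addr0 -[in RHS](mulr0 2) -conic; ring.
have x_near2 : 1 <= x <= 3 by nia.
have : [|| x == 1, x == 2 | x == 3] by lia.
case/or3P=> /eqP x_val; rewrite x_val in square_sum.
- by exfalso; nia.
- by split=> //; nia.
- by exfalso; nia.
Qed.

Lemma num_equiv_Q9_of (X : CS_surface) (D : Div X) (a b c : int) :
  (forall F : Div X, 9 * dot D F = a * dot (E1 X) F + b * dot (E3 X) F + c * dot (C1 X) F) ->
  num_equiv_Q9 D a b c.
Proof.
move=> D9 F; rewrite -D9 intrM.
change ((9 : int)%:~R : rat) with (9%:R : rat).
by rewrite mulrA div1r mulVf // mul1r.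
Qed.

Theorem mainTheorem4 (X : CS_surface) (hX : is_Cartwright_Steger X) (D : Div X) :
  dot (KX X) D = 2 -> dot D D = 0 ->
  [/\ num_equiv_Q9 D 1 (-1) 2, dot D (E1 X) = 2, dot D (E3 X) = 2 & dot D (C1 X) = 0]
  \/
  [/\ num_equiv_Q9 D (-1) 5 (-2), dot D (E1 X) = 2, dot D (E3 X) = 2 & dot D (C1 X) = 4].
Proof.
move=> DK DD; case: hX => KE3 _ /(_ D) [n [n_neq0 [a [b [c D_coord]]]]].
have y2 : dot D (E3 X) = 2 by rewrite dotC -KE3.
case: (@conic_int_solutions (dot D (E1 X)) (dot D (C1 X))) => [|x2 [z0 | z4]].
- transitivity (- (18 * dot D D)); last by rewrite DD mulr0 oppr0.
  by rewrite (self_intersection_degrees n_neq0 D_coord) y2; ring.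
- left; split => //; apply: num_equiv_Q9_of => F.
  by have := degrees_determine_dot n_neq0 D_coord F; rewrite x2 y2 z0; lia.
- right; split => //; apply: num_equiv_Q9_of => F.
  by have := degrees_determine_dot n_neq0 D_coord F; rewrite x2 y2 z4; lia.
Qed.
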